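(* Let $k$ be a positive integer. Suppose $(x_i)_{i\ge0}$ is a sequence of integers such that $x_0=1$, $2k\mid x_i$ for all $i\ge1$, and for each $i\ge1$, $4k\mid x_i$ if and only if $i$ is not a power of two. Then for every $n\in\mathbb{N}$, the number $(2k)^{-n}\det[x_{i+j}]_{0\le i,j\le n}$ is an odd integer.
   Context: Powers of two are $1,2,4,8,\ldots$. $\det[x_{i+j}]_{0\le i,j\le n}$ denotes the determinant of the $(n+1)\times(n+1)$ Hankel matrix with $(i,j)$-entry $x_{i+j}$. *)

From HB Require Import structures.
From mathcomp Require Import all_boot all_order all_algebra.
Set Implicit Arguments. Unset Strict Implicit. Unset Printing Implicit Defensive.
Import Order.TTheory GRing.Theory Num.Theory.

Definition is_pow2 (i : nat) : Prop := exists e : nat, i = (2 ^ e)%N.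

Definition hankel (x : nat -> int) (n : nat) : 'M[int]_(n.+1) :=
  \matrix_(i < n.+1, j < n.+1) x (i + j)%N.

(* Dividing rows 1..n of the Hankel matrix by 2k leaves an integer matrix K with
   det H = (2k)^n det K.  Modulo 2 the first row of K is (1, 0, ..., 0) and, for
   i, j >= 1, K_ij is odd iff i + j is a power of two, so det K is congruent to
   det [i + j is a power of two]_{1 <= i, j <= n}.  Over F_2 that determinant
   counts the permutations s of {1..n} with every i + s(i) a power of two, and
   there is exactly one: if P is the least power of two above n, such an s must
   send every v >= P - n to P - v, and it restricts to such a permutation of
   {1..P-n-1}. *)

From HB Require Import structures.
From mathcomp Require Import all_boot all_order all_algebra all_fingroup.
From mathcomp Require Import zify.
Import Order.TTheory GRing.Theory Num.Theory.

Set Implicit Arguments.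
Unset Strict Implicit.
Unset Printing Implicit Defensive.

Definition next_pow2 (N : nat) : nat := 2 ^ (trunc_log 2 N).+1.

Lemma next_pow2_bounds N : 0 < N -> N < next_pow2 N <= N.*2.
Proof.
move=> N_gt0; rewrite /next_pow2 trunc_log_ltn //= expnS -muln2 mulnC leq_mul2r /=.
exact: trunc_logP.
Qed.

Lemma next_pow2_is_pow2 N : is_pow2 (next_pow2 N).
Proof. by exists (trunc_log 2 N).+1. Qed.

(* The only power of two in ]next_pow2 N / 2, 2 N] is next_pow2 N itself. *)
Lemma pow2_sum_eq N w u : 0 < N -> next_pow2 N <= w.*2 -> 0 < u <= N -> w <= N ->
  is_pow2 (w + u) -> w + u = next_pow2 N.
Proof.
move=> N_gt0 + u_range w_le [f wuE]; rewrite /next_pow2 => P_le.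
have N_ge := trunc_logP (isT : 1 < 2) N_gt0.
have N_lt := trunc_log_ltn N (isT : 1 < 2).
set e := trunc_log 2 N in N_ge N_lt P_le *.
have : 2 ^ e < 2 ^ f < 2 ^ e.+2 by rewrite -wuE; move: P_le N_lt; rewrite !expnS; lia.
by rewrite !ltn_exp2l // wuE => /andP[? ?]; have -> : f = e.+1 by lia.
Qed.

Definition pow2_pairing (N : nat) (s t : nat -> nat) : Prop :=
  forall v, 0 < v <= N ->
    [/\ 0 < s v <= N, 0 < t v <= N, t (s v) = v, s (t v) = v & is_pow2 (v + s v)].

Section Pairing.

Variables (N : nat) (s t : nat -> nat).
Hypotheses (N_gt0 : 0 < N) (st : pow2_pairing N s t).

Local Notation P := (next_pow2 N).

Lemma pow2_pairing_top v : P - N <= v <= N -> s v = P - v.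
Proof.
move=> v_range; have [N_lt_P P_le] := andP (next_pow2_bounds N_gt0).
have [sv_range _ _ _ v_sv] := st (v := v) ltac:(lia).
case: (leqP P v.*2) => [P_le_2v | P_gt_2v].
  by have := pow2_sum_eq N_gt0 P_le_2v sv_range (proj2 (andP v_range)) v_sv; lia.
(* Otherwise [w := P - v] lies above P/2, and its partner [t w] must be [v]. *)
move wE : (P - v) => w.
have [_ tw_range _ stw _] := st (v := w) ltac:(lia).
have [_ _ _ _ tw_stw] := st (v := t w) tw_range.
rewrite stw addnC in tw_stw.
have := pow2_sum_eq (w := w) N_gt0 ltac:(lia) tw_range ltac:(lia) tw_stw.
by move=> wtwE; have <- : t w = v by lia.
Qed.

Lemma pow2_pairing_restrict : pow2_pairing (P - N - 1) s t.
Proof.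
have [N_lt_P P_le] := andP (next_pow2_bounds N_gt0).
move=> u u_range; have [su_range tu_range tsu stu u_su] := st (v := u) ltac:(lia).
have su_le : s u <= P - N - 1.
  rewrite leqNgt; apply/negP => su_gt.
  have [_ _ tsw _ _] := st (v := P - s u) ltac:(lia).
  rewrite pow2_pairing_top in tsw; last by lia.
  by move: tsw; rewrite (_ : P - (P - s u) = s u) ?tsu; lia.
have tu_le : t u <= P - N - 1.
  rewrite leqNgt; apply/negP => tu_gt.
  by move: stu; rewrite pow2_pairing_top; lia.
by split=> //; lia.
Qed.

End Pairing.

Lemma pow2_pairing_exists N : exists s, pow2_pairing N s s.
Proof.
elim/ltn_ind: N => N IH; case: (posnP N) => [-> | N_gt0].
  by exists id => v; lia.
have [N_lt_P P_le] := andP (next_pow2_bounds N_gt0).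
set P := next_pow2 N in N_lt_P P_le.
have [s0 s0_pairing] := IH (P - N - 1) ltac:(lia).
exists (fun v => if P - N <= v then P - v else s0 v) => v v_range.
case: ifP => v_top.
  rewrite ifT; last by lia.
  by split; [lia | lia | lia | lia | rewrite subnKC; [exact: next_pow2_is_pow2 | lia]].
have [s0v_range _ s0s0v _ v_s0v] := s0_pairing v ltac:(lia).
rewrite ifF ?s0s0v //; last by apply/negbTE; rewrite -ltnNge; lia.
by split=> //; lia.
Qed.

Lemma pow2_pairing_unique N s t s' t' : pow2_pairing N s t -> pow2_pairing N s' t' ->
  forall v, 0 < v <= N -> s v = s' v.
Proof.
elim/ltn_ind: N s t s' t' => N IH s t s' t' st st' v v_range.
have N_gt0 : 0 < N by lia.
have [N_lt_P P_le] := andP (next_pow2_bounds N_gt0).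
case: (leqP (next_pow2 N - N) v) => v_top.
  by rewrite (pow2_pairing_top N_gt0 st) ?(pow2_pairing_top N_gt0 st') //; lia.
apply: (IH (next_pow2 N - N - 1) _ s t s' t'); try exact: pow2_pairing_restrict; lia.
Qed.

Lemma pow2_perm_unique n : exists s0 : 'S_n,
  (forall i : 'I_n, is_pow2 (i + s0 i + 2)) /\
  (forall s : 'S_n, (forall i : 'I_n, is_pow2 (i + s i + 2)) -> s = s0).
Proof.
case: n => [|n]; first by exists 1%g; split=> [[] | s _]; last by apply/permP => -[].
have [g g_pairing] := pow2_pairing_exists n.+1.
have g_ord (i : 'I_n.+1) := g_pairing i.+1 (ltn_ord i).
pose f (i : 'I_n.+1) : 'I_n.+1 := inord (g i.+1).-1.
have fE (i : 'I_n.+1) : (f i).+1 = g i.+1.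
  by have [g_range _ _ _ _] := g_ord i; rewrite inordK; lia.
have f_inj : injective f.
  move=> i j /(congr1 (fun k : 'I_n.+1 => g k.+1)) /=; rewrite !fE.
  have [_ _ ggi _ _] := g_ord i; have [_ _ ggj _ _] := g_ord j.
  by rewrite ggi ggj => -[/val_inj].
exists (perm f_inj); split=> [i | s s_pow2].
  have [_ _ _ _ i_gi] := g_ord i.
  rewrite permE (_ : i + f i + 2 = i.+1 + (f i).+1); last by lia.
  by rewrite fE.
have s_pairing : pow2_pairing n.+1 (fun v => (s (inord v.-1)).+1)
                                   (fun v => ((s^-1)%g (inord v.-1)).+1).
  move=> v v_range; have v_ord : (inord v.-1 : 'I_n.+1) = v.-1 :> nat.
    by rewrite inordK; lia.
  rewrite !inord_val permK permKV v_ord.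
  split; try lia; [exact: ltn_ord | exact: ltn_ord |].
  have := s_pow2 (inord v.-1); rewrite v_ord.
  by rewrite (_ : v.-1 + _ + 2 = v + (s (inord v.-1)).+1) //; lia.
apply/permP => i; apply/val_inj/succn_inj; rewrite permE fE.
by have := pow2_pairing_unique s_pairing g_pairing (ltn_ord i : 0 < i.+1 <= n.+1);
  rewrite /= inord_val.
Qed.

Local Open Scope ring_scope.

Definition is_pow2b (q : nat) : bool := (2 ^ trunc_log 2 q == q)%N.

Lemma is_pow2P q : reflect (is_pow2 q) (is_pow2b q).
Proof.
apply: (iffP eqP) => [<- | [e ->]]; first by exists (trunc_log 2 q).
by rewrite trunc_expnK.
Qed.

Definition pow2_mx n : 'M['F_2]_n := \matrix_(i, j) (is_pow2b (i + j + 2))%:R.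

Lemma det_unique_perm (R : comPzRingType) n (A : 'M[R]_n) (s0 : 'S_n) :
  (forall s : 'S_n, (forall i, A i (s i) != 0) -> s = s0) ->
  \det A = (-1) ^+ s0 * \prod_i A i (s0 i).
Proof.
move=> s0_unique; rewrite /determinant (bigD1 s0) //= [X in _ + X]big1 ?addr0 // => s s_neq.
have [i /eqP Ai0 | ] := pickP (fun i => A i (s i) == 0).
  by rewrite (bigD1 i) //= Ai0 mul0r mulr0.
by move=> A_nz; case/eqP: s_neq; apply: s0_unique => i; rewrite A_nz.
Qed.

Lemma det_pow2_mx n : \det (pow2_mx n) = 1.
Proof.
have [s0 [s0_pow2 s0_unique]] := pow2_perm_unique n.
rewrite (det_unique_perm (s0 := s0)); last first.
  by move=> s s_nz; apply: s0_unique => i; move: (s_nz i); rewrite mxE; case: is_pow2P.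
rewrite (_ : -1 = 1 :> 'F_2); last exact: val_inj.
by rewrite expr1n mul1r big1 // => i _; rewrite mxE; case: is_pow2P (s0_pow2 i).
Qed.

Lemma det_scale_lower_rows (R : comPzRingType) n (c : R) (B : 'M[R]_n.+1) :
  \det (\matrix_(i, j) ((if i == ord0 then 1 else c) * B i j)) = c ^+ n * \det B.
Proof.
pose d : 'rV[R]_n.+1 := \row_i (if i == ord0 then 1 else c).
have -> : \matrix_(i, j) ((if i == ord0 then 1 else c) * B i j) = diag_mx d *m B.
  by apply/matrixP => i j; rewrite mul_diag_mx !mxE.
rewrite det_mulmx det_diag big_ord_recl !mxE /= mul1r.
by rewrite (eq_bigr (fun _ => c)) ?prodr_const ?card_ord // => i _; rewrite mxE.
Qed.

Lemma det_first_row_delta (R : comPzRingType) n (A : 'M[R]_n.+1) :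
  A ord0 ord0 = 1 -> (forall j, j != ord0 -> A ord0 j = 0) ->
  \det A = \det (row' ord0 (col' ord0 A)).
Proof.
move=> A00 A0j; rewrite (expand_det_row _ ord0) (bigD1 ord0) //=.
rewrite [X in _ + X]big1 ?addr0 => [|j /A0j ->]; last by rewrite mul0r.
by rewrite A00 mul1r /cofactor expr0 mul1r.
Qed.

Lemma intr_F2 (z : int) : (z%:~R : 'F_2) = (~~ (2 %| z)%Z)%:R.
Proof.
rewrite {1}(divz_eq z 2) rmorphD rmorphM /= (_ : 2%:~R = 0 :> 'F_2) ?mulr0 ?add0r;
  last exact: val_inj.
have [mod0 | mod1] : (z %% 2 = 0 \/ z %% 2 = 1)%Z by lia.
  by rewrite mod0 (introT dvdz_mod0P mod0).
by rewrite mod1; case: (boolP (2 %| z)%Z) => // /dvdz_mod0P; lia.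
Qed.

Lemma divz_F2 (c z : int) : c != 0 -> (c %| z)%Z ->
  ((z %/ c)%Z%:~R : 'F_2) = (~~ (2 * c %| z)%Z)%:R.
Proof. by move=> c_neq0 c_dvd; rewrite intr_F2 -{2}(divzK c_dvd) dvdz_mul2r. Qed.

Lemma divz_F2_pow2 (c z : int) l : c != 0 -> (c %| z)%Z ->
  ((2 * c %| z)%Z <-> ~ is_pow2 l) -> ((z %/ c)%Z%:~R : 'F_2) = (is_pow2b l)%:R.
Proof.
move=> c_neq0 c_dvd [to_npow2 from_npow2]; rewrite divz_F2 //.
suff -> : (2 * c %| z)%Z = ~~ is_pow2b l by rewrite negbK.
apply/idP/idP => [/to_npow2 l_npow2 | /negP l_npow2].
  by apply/negP => /is_pow2P.
by apply: from_npow2 => /is_pow2P.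
Qed.

Theorem lemma2p3 (k : nat) (x : nat -> int)
  (hk : (0 < k)%N)
  (hx0 : x 0%N = 1)
  (hdiv : forall i : nat, (1 <= i)%N -> ((2 * k)%N%:Z %| x i)%Z)
  (hpow : forall i : nat, (1 <= i)%N -> (((4 * k)%N%:Z %| x i)%Z <-> ~ is_pow2 i)) :
  forall n : nat, exists m : int,
    ~~ (2%:Z %| m)%Z /\ \det (hankel x n) = ((2 * k)%N%:Z) ^+ n * m.
Proof.
move=> n; set c : int := (2 * k)%N%:Z.
have c_neq0 : c != 0 by rewrite /c; apply/eqP; lia.
have x_even l : (0 < l)%N -> (2 %| x l)%Z.
  by move=> l_gt0; apply: dvdz_trans (hdiv l l_gt0); apply/dvdz_mod0P; lia.
have quotient_odd l : (0 < l)%N -> ((x l %/ c)%Z%:~R : 'F_2) = (is_pow2b l)%:R.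
  move=> l_gt0; apply: divz_F2_pow2; rewrite ?hdiv //.
  by rewrite /c -PoszM mulnA; exact: hpow.
pose K : 'M[int]_n.+1 :=
  \matrix_(i, j) if i == ord0 then x (i + j)%N else (x (i + j)%N %/ c)%Z.
have hankelE : hankel x n = \matrix_(i, j) ((if i == ord0 then 1 else c) * K i j).
  apply/matrixP => i j; rewrite !mxE; case: eqP => [_ | /eqP i_neq0]; first by rewrite mul1r.
  by rewrite mulrC divzK //; apply: hdiv; move: i_neq0; rewrite -val_eqE /=; lia.
exists (\det K); rewrite hankelE det_scale_lower_rows; split=> //.
suff : ((\det K)%:~R : 'F_2) = 1 by rewrite intr_F2; case: (_ %| _)%Z.
rewrite -det_map_mx det_first_row_delta => [| | j j_neq0]; rewrite ?mxE /= ?hx0 //.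
  rewrite -[RHS](det_pow2_mx n); congr (\det _); apply/matrixP => i j.
  by rewrite !mxE /= (_ : bump 0 i + bump 0 j = i + j + 2)%N ?quotient_odd //;
    rewrite /bump /=; lia.
by rewrite intr_F2 x_even //; move: j_neq0; rewrite -val_eqE /=; lia.
Qed.
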